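(* Let $n\ge2$. The category $2$-$Ass\overline{\mathbf{V}}_n$ of 2-associative $\overline{\mathbf{V}}_n$-algebras is isomorphic to the category $\mathbf{EnrGrp}_n$ of $n$-enriched groups.
   Context: $\overline{\mathbf{V}}_n$ is the variety whose signature consists of one $(n+1)$-ary operation symbol $\theta$, binary operation symbols $\alpha_1,\dots,\alpha_n$ and one constant $e$, subject to the identities $\alpha_i(a,a)=e$ $(1\le i\le n)$ and $\theta(\alpha_1(a,b),\dots,\alpha_n(a,b),b)=a$. A $\overline{\mathbf{V}}_n$-algebra is 2-associative if for all $a_1,\dots,a_n,b_1,\dots,b_n,c$ one has $\theta(a_1,\dots,a_n,\theta(b_1,\dots,b_n,c))=\theta(\theta(a_1,\dots,a_n,b_1),\dots,\theta(a_1,\dots,a_n,b_n),c)$; $2$-$Ass\overline{\mathbf{V}}_n$ is the full subcategory of $\overline{\mathbf{V}}_n$-algebras (with homomorphisms preserving $\theta$, all $\alpha_i$ and $e$) consisting of 2-associative algebras. An $n$-enriched group ($n\ge2$) is a triple $(G,\gamma,(\alpha_i)_{1\le i\le n})$ where $G$ is a group with unit $e$, $\gamma:G^n\to G$ is a map (not necessarily a homomorphism) and $\alpha_1,\dots,\alpha_n$ are binary operations on $G$, such that for all elements: $\gamma(\alpha_1(a,b),\dots,\alpha_n(a,b))\,b=a$; $\alpha_i(a,a)=e$; and $\gamma(a_1,\dots,a_n)\gamma(b_1,\dots,b_n)=\gamma(\gamma(a_1,\dots,a_n)b_1,\dots,\gamma(a_1,\dots,a_n)b_n)$. $\mathbf{EnrGrp}_n$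 has $n$-enriched groups as objects and group homomorphisms preserving $\gamma$ and all $\alpha_i$ as morphisms. *)

From mathcomp Require Import all_boot.
From Stdlib Require Import ProofIrrelevance.

Set Implicit Arguments.
Unset Strict Implicit.
Unset Printing Implicit Defensive.

Record Category := {
  Ob : Type;
  Hom : Ob -> Ob -> Type;
  cid : forall A, Hom A A;
  ccomp : forall A B C, Hom B C -> Hom A B -> Hom A C;
  ccomp_id_l : forall A B (f : Hom A B), ccomp (cid B) f = f;
  ccomp_id_r : forall A B (f : Hom A B), ccomp f (cid A) = f;
  ccomp_assoc : forall A B C D (h : Hom C D) (g : Hom B C) (f : Hom A B),
      ccomp h (ccomp g f) = ccomp (ccomp h g) f
}.
Arguments Hom : clear implicits.
Arguments cid {c}.
Arguments ccomp {c A B C}.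

Record Functor (C D : Category) := {
  fob : Ob C -> Ob D;
  fmap : forall A B, Hom C A B -> Hom D (fob A) (fob B);
  fmap_id : forall A, fmap (cid (c:=C) A) = cid (fob A);
  fmap_comp : forall A B E (g : Hom C B E) (f : Hom C A B),
      fmap (ccomp g f) = ccomp (fmap g) (fmap f)
}.
Arguments fob {C D}.
Arguments fmap {C D} _ {A B}.

Definition hom_cast (C : Category) (A A' B B' : Ob C)
  (eA : A = A') (eB : B = B') (f : Hom C A B) : Hom C A' B' :=
  match eA in _ = X, eB in _ = Y return Hom C X Y with
  | erefl, erefl => f end.

Definition functor_left_inverse (C D : Category) (F : Functor C D)
  (G : Functor D C) : Prop :=
  exists e : forall A, fob G (fob F A) = A,
    forall A B (f : Hom C A B), hom_cast (e A) (e B) (fmap G (fmap F f)) = f.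

Definition cat_isomorphic (C D : Category) : Prop :=
  exists (F : Functor C D) (G : Functor D C),
    functor_left_inverse F G /\ functor_left_inverse G F.

Lemma sig_eq_irr (T : Type) (P : T -> Prop) (x y : sig P) :
  proj1_sig x = proj1_sig y -> x = y.
Proof.
case: x => x px; case: y => y py /= exy; subst y.
by rewrite (proof_irrelevance _ px py).
Qed.

(* An (n+1)-ary operation theta(a_1,...,a_n,b) is encoded as          *)
(* theta : ('I_n -> T) -> T -> T.                                      *)

Record VbarAlg (n : nat) := {
  vcar : Type;
  vtheta : ('I_n -> vcar) -> vcar -> vcar;
  valpha : 'I_n -> vcar -> vcar -> vcar;
  ve : vcar;
  valpha_diag : forall i a, valpha i a a = ve;
  vtheta_alpha : forall a b, vtheta (fun i => valpha i a b) b = a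
}.

Definition two_associative n (A : VbarAlg n) : Prop :=
  forall (a b : 'I_n -> vcar A) (c : vcar A),
    vtheta a (vtheta b c) = vtheta (fun i => vtheta a (b i)) c.

Record TwoAssVbarAlg (n : nat) := {
  tav_alg :> VbarAlg n;
  tav_ass : two_associative tav_alg
}.

Definition is_vhom n (A B : VbarAlg n) (f : vcar A -> vcar B) : Prop :=
  [/\ forall a b, f (vtheta a b) = vtheta (fun i => f (a i)) (f b),
      forall i a b, f (valpha i a b) = valpha i (f a) (f b)
    & f (ve A) = ve B].

Definition vhom n (A B : TwoAssVbarAlg n) := {f : vcar A -> vcar B | is_vhom f}.

Definition vhom_id n (A : TwoAssVbarAlg n) : vhom A A.
Proof. by exists (fun x => x); split. Defined.

Definition vhom_comp n (A B C : TwoAssVbarAlg n) (g : vhom B C) (f : vhom A B) :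
  vhom A C.
Proof.
exists (fun x => proj1_sig g (proj1_sig f x)).
case: g f => g [g1 g2 g3] [f [f1 f2 f3]] /=; split.
- by move=> a b; rewrite f1 g1.
- by move=> i a b; rewrite f2 g2.
- by rewrite f3 g3.
Defined.

Definition TwoAssVbar (n : nat) : Category.
Proof.
refine {| Ob := TwoAssVbarAlg n; Hom := @vhom n; cid := @vhom_id n;
          ccomp := @vhom_comp n |}.
- by move=> A B f; apply: sig_eq_irr.
- by move=> A B f; apply: sig_eq_irr.
- by move=> A B C D h g f; apply: sig_eq_irr.
Defined.

Record EnrGroup (n : nat) := {
  gcar : Type;
  gmul : gcar -> gcar -> gcar;
  ginv : gcar -> gcar;
  gone : gcar;
  gmulA : forall x y z, gmul x (gmul y z) = gmul (gmul x y) z;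
  gmul1 : forall x, gmul gone x = x;
  gmulr1 : forall x, gmul x gone = x;
  gmulV : forall x, gmul (ginv x) x = gone;
  gmulVr : forall x, gmul x (ginv x) = gone;
  ggamma : ('I_n -> gcar) -> gcar;
  galpha : 'I_n -> gcar -> gcar -> gcar;
  ggamma_alpha : forall a b, gmul (ggamma (fun i => galpha i a b)) b = a;
  galpha_diag : forall i a, galpha i a a = gone;
  ggamma_mul : forall a b : 'I_n -> gcar,
      gmul (ggamma a) (ggamma b) = ggamma (fun i => gmul (ggamma a) (b i))
}.

Definition is_ghom n (A B : EnrGroup n) (f : gcar A -> gcar B) : Prop :=
  [/\ forall x y, f (gmul x y) = gmul (f x) (f y),
      forall a, f (ggamma a) = ggamma (fun i => f (a i))
    & forall i a b, f (galpha i a b) = galpha i (f a) (f b)].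

Definition ghom n (A B : EnrGroup n) := {f : gcar A -> gcar B | is_ghom f}.

Definition ghom_id n (A : EnrGroup n) : ghom A A.
Proof. by exists (fun x => x); split. Defined.

Definition ghom_comp n (A B C : EnrGroup n) (g : ghom B C) (f : ghom A B) :
  ghom A C.
Proof.
exists (fun x => proj1_sig g (proj1_sig f x)).
case: g f => g [g1 g2 g3] [f [f1 f2 f3]] /=; split.
- by move=> x y; rewrite f1 g1.
- by move=> a; rewrite f2 g2.
- by move=> i a b; rewrite f3 g3.
Defined.

Definition EnrGrp (n : nat) : Category.
Proof.
refine {| Ob := EnrGroup n; Hom := @ghom n; cid := @ghom_id n;
          ccomp := @ghom_comp n |}.
- by move=> A B f; apply: sig_eq_irr.
- by move=> A B f; apply: sig_eq_irr.
- by move=> A B C D h g f; apply: sig_eq_irr.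
Defined.

(* Since alpha_i(b,b) = e, theta(e,...,e,b) = b, and then
   2-associativity gives theta(a,b) = theta(a,e) * b for the product
   x * y := theta(x,...,x,y).  This product is associative (2-associativity
   again), has unit e and left inverses theta(alpha_1(e,x),...,alpha_n(e,x),e),
   so it is a group, and gamma(a) := theta(a,e) makes it an n-enriched group.
   Conversely an n-enriched group gives theta(a,b) := gamma(a) b, for which the
   enriched-group axioms are exactly the identities of V_n and 2-associativity.
   The round trips return the same operations (in an enriched group
   gamma(x,...,x) = x, and inverses are unique), so the two functors are
   strictly inverse to each other. *)

From mathcomp Require Import all_boot.
From Stdlib Require Import FunctionalExtensionality ProofIrrelevance Eqdep.

Set Implicit Arguments.
Unset Strict Implicit.
Unset Printing Implicit Defensive.

Lemma val_hom_cast (C : Category) (car : Ob C -> Type)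
    (val : forall A B, Hom C A B -> car A -> car B)
    (A A' B B' : Ob C) (eA : A = A') (eB : B = B')
    (cA : car A = car A') (cB : car B = car B') (f : Hom C A B) (x : car A') :
  val _ _ (hom_cast eA eB f) x =
  ecast X X cB (val _ _ f (ecast X X (esym cA) x)).
Proof.
case: A' / eA cA x => cA x; case: B' / eB cB => cB.
by rewrite (UIP_refl _ _ cA) (UIP_refl _ _ cB).
Qed.

Section LeftGroup.
Variables (T : Type) (mul : T -> T -> T) (one : T) (inv : T -> T).
Hypotheses (mulA : associative mul) (mul1 : left_id one mul)
  (mulV : forall x, mul (inv x) x = one).

Lemma left_group_mulVr x : mul x (inv x) = one.
Proof.
rewrite -[LHS]mul1 -{1}(mulV (inv x)) -mulA (mulA (inv x)) mulV mul1.
exact: mulV.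
Qed.

Lemma left_group_mulr1 : right_id one mul.
Proof. by move=> x; rewrite -(mulV x) mulA left_group_mulVr mul1. Qed.

End LeftGroup.

Section TwoAssToEnrGroup.
Variables (n : nat) (A : TwoAssVbarAlg n).
Local Notation e := (ve A).

Definition tav_mul (x y : vcar A) := vtheta (fun _ => x) y.
Definition tav_inv (x : vcar A) := vtheta (fun i => valpha i e x) e.
Definition tav_gamma (a : 'I_n -> vcar A) := vtheta a e.

Lemma vtheta_const_ve (b : vcar A) : vtheta (fun _ => e) b = b.
Proof.
rewrite -[RHS](vtheta_alpha b b); congr vtheta.
by apply: functional_extensionality => i; rewrite valpha_diag.
Qed.

Lemma vtheta_gammaE (a : 'I_n -> vcar A) (b : vcar A) :
  vtheta a b = tav_mul (tav_gamma a) b.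
Proof. by rewrite -{1}(vtheta_const_ve b) tav_ass. Qed.

Lemma tav_mulA : associative tav_mul.
Proof. by move=> x y z; apply: tav_ass. Qed.

Lemma tav_mul1 : left_id e tav_mul.
Proof. exact: vtheta_const_ve. Qed.

Lemma tav_mulV x : tav_mul (tav_inv x) x = e.
Proof. by rewrite -vtheta_gammaE vtheta_alpha. Qed.

Lemma tav_mulr1 : right_id e tav_mul.
Proof. exact: left_group_mulr1 tav_mulA tav_mul1 tav_mulV. Qed.

Lemma tav_mulVr x : tav_mul x (tav_inv x) = e.
Proof. exact: (left_group_mulVr tav_mulA tav_mul1 tav_mulV x). Qed.

Lemma tav_gamma_alpha a b : tav_mul (tav_gamma (fun i => valpha i a b)) b = a.
Proof. by rewrite -vtheta_gammaE vtheta_alpha. Qed.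

Lemma tav_gamma_mul (a b : 'I_n -> vcar A) :
  tav_mul (tav_gamma a) (tav_gamma b) =
  tav_gamma (fun i => tav_mul (tav_gamma a) (b i)).
Proof. exact: tav_ass. Qed.

Definition enr_group_of_tav : EnrGroup n :=
  @Build_EnrGroup n (vcar A) tav_mul tav_inv e tav_mulA tav_mul1 tav_mulr1
    tav_mulV tav_mulVr tav_gamma (@valpha n A) tav_gamma_alpha
    (@valpha_diag n A) tav_gamma_mul.

End TwoAssToEnrGroup.

Lemma eq_TwoAssVbarAlg n (T : Type) th th' al (e : T) p p' q q' r r' :
  th = th' ->
  {| tav_alg := @Build_VbarAlg n T th al e p q; tav_ass := r |} =
  {| tav_alg := @Build_VbarAlg n T th' al e p' q'; tav_ass := r' |}.
Proof.
move=> eth; subst th'.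
by rewrite (proof_irrelevance _ p p') (proof_irrelevance _ q q')
  (proof_irrelevance _ r r').
Qed.

Section EnrGroupToTwoAss.
Variables (n : nat) (G : EnrGroup n).
Local Notation e := (gone G).

Definition enr_theta (a : 'I_n -> gcar G) (b : gcar G) := gmul (ggamma a) b.

Lemma enr_theta_ass (a b : 'I_n -> gcar G) (c : gcar G) :
  enr_theta a (enr_theta b c) = enr_theta (fun i => enr_theta a (b i)) c.
Proof. by rewrite /enr_theta gmulA ggamma_mul. Qed.

Definition tav_of_enr_group : TwoAssVbarAlg n :=
  {| tav_alg := @Build_VbarAlg n (gcar G) enr_theta (@galpha n G) e
                  (@galpha_diag n G) (@ggamma_alpha n G);
     tav_ass := enr_theta_ass |}.

Lemma ginv_unique (x y : gcar G) : gmul y x = e -> y = ginv x.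
Proof. by move=> yx1; rewrite -[y]gmulr1 -(gmulVr x) gmulA yx1 gmul1. Qed.

Lemma ggamma_alpha1 (x : gcar G) : ggamma (fun i => galpha i x e) = x.
Proof. by rewrite -[RHS](ggamma_alpha x e) gmulr1. Qed.

Lemma ggamma_const1 : ggamma (fun _ => e) = e.
Proof.
rewrite -[RHS]ggamma_alpha1; congr ggamma.
by apply: functional_extensionality => i; rewrite galpha_diag.
Qed.

Lemma ggamma_const (x : gcar G) : ggamma (fun _ => x) = x.
Proof.
have gamma_constE (a : 'I_n -> gcar G) : ggamma (fun _ => ggamma a) = ggamma a.
  by have := ggamma_mul a (fun _ => e); rewrite ggamma_const1 gmulr1 => /esym.
by rewrite -{1}(ggamma_alpha1 x) gamma_constE ggamma_alpha1.
Qed.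

End EnrGroupToTwoAss.

Lemma eq_EnrGroup n (T : Type) m m' i i' (o : T) g g' al
  pA pA' p1 p1' p2 p2' p3 p3' p4 p4' q1 q1' q2 q2' q3 q3' :
  m = m' -> i = i' -> g = g' ->
  @Build_EnrGroup n T m i o pA p1 p2 p3 p4 g al q1 q2 q3 =
  @Build_EnrGroup n T m' i' o pA' p1' p2' p3' p4' g' al q1' q2' q3'.
Proof. by move=> em ei eg; subst; f_equal; apply: proof_irrelevance. Qed.

Lemma ghom1 n (G H : EnrGroup n) (f : gcar G -> gcar H) :
  is_ghom f -> f (gone G) = gone H.
Proof.
case=> fM _ _; have f1_idem : gmul (f (gone G)) (f (gone G)) = f (gone G).
  by rewrite -fM gmul1.
by rewrite -[LHS]gmul1 -(gmulV (f (gone G))) -gmulA f1_idem.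
Qed.

Definition ghom_of_vhom n (A B : TwoAssVbarAlg n) (f : vhom A B) :
  ghom (enr_group_of_tav A) (enr_group_of_tav B).
Proof.
exists (proj1_sig f); case: f => f [fth fal fe]; split => /=.
- by move=> x y; rewrite /tav_mul fth.
- by move=> a; rewrite /tav_gamma fth fe.
- exact: fal.
Defined.

Definition vhom_of_ghom n (G H : EnrGroup n) (f : ghom G H) :
  vhom (tav_of_enr_group G) (tav_of_enr_group H).
Proof.
exists (proj1_sig f); case: f => f fhom; have f1 := ghom1 fhom.
case: fhom => fM fgam fal; split => //=.
by move=> a b; rewrite /enr_theta fM fgam.
Defined.

Definition TwoAssVbar_to_EnrGrp n : Functor (TwoAssVbar n) (EnrGrp n).
Proof.
refine (@Build_Functor (TwoAssVbar n) (EnrGrp n)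
  (@enr_group_of_tav n) (@ghom_of_vhom n) _ _).
- by move=> A; apply: sig_eq_irr.
- by move=> A B C g f; apply: sig_eq_irr.
Defined.

Definition EnrGrp_to_TwoAssVbar n : Functor (EnrGrp n) (TwoAssVbar n).
Proof.
refine (@Build_Functor (EnrGrp n) (TwoAssVbar n)
  (@tav_of_enr_group n) (@vhom_of_ghom n) _ _).
- by move=> G; apply: sig_eq_irr.
- by move=> G H K g f; apply: sig_eq_irr.
Defined.

Lemma tav_of_enr_groupK n (A : TwoAssVbarAlg n) :
  tav_of_enr_group (enr_group_of_tav A) = A.
Proof.
have eth : enr_theta (G := enr_group_of_tav A) = vtheta (v := A).
  do 2!apply: functional_extensionality => ?.
  by rewrite /enr_theta /= -vtheta_gammaE.
by case: A eth => [[T th al e p q] r] /= eth; apply: eq_TwoAssVbarAlg.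
Qed.

Lemma enr_group_of_tavK n (G : EnrGroup n) :
  enr_group_of_tav (tav_of_enr_group G) = G.
Proof.
have emul : tav_mul (A := tav_of_enr_group G) = gmul (e := G).
  do 2!apply: functional_extensionality => ?.
  by rewrite /tav_mul /= /enr_theta ggamma_const.
have einv : tav_inv (A := tav_of_enr_group G) = ginv (e := G).
  apply: functional_extensionality => x; rewrite /tav_inv /= /enr_theta gmulr1.
  exact/ginv_unique/ggamma_alpha.
have egam : tav_gamma (A := tav_of_enr_group G) = ggamma (e := G).
  by apply: functional_extensionality => a; apply: gmulr1.
case: G emul einv egam => T m i o pA p1 p2 p3 p4 g al q1 q2 q3 /=.
exact: eq_EnrGroup.
Qed.

Lemma TwoAssVbar_to_EnrGrpK n :
  functor_left_inverse (TwoAssVbar_to_EnrGrp n) (EnrGrp_to_TwoAssVbar n).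
Proof.
exists (@tav_of_enr_groupK n) => A B f.
apply: sig_eq_irr; apply: functional_extensionality => x.
by rewrite (@val_hom_cast (TwoAssVbar n) (fun A => vcar A)
  (fun A B (f : vhom A B) => proj1_sig f) _ _ _ _
  (tav_of_enr_groupK A) (tav_of_enr_groupK B) erefl erefl).
Qed.

Lemma EnrGrp_to_TwoAssVbarK n :
  functor_left_inverse (EnrGrp_to_TwoAssVbar n) (TwoAssVbar_to_EnrGrp n).
Proof.
exists (@enr_group_of_tavK n) => G H f.
apply: sig_eq_irr; apply: functional_extensionality => x.
by rewrite (@val_hom_cast (EnrGrp n) (fun G => gcar G)
  (fun G H (f : ghom G H) => proj1_sig f) _ _ _ _
  (enr_group_of_tavK G) (enr_group_of_tavK H) erefl erefl).
Qed.

Theorem theorem4p7 (n : nat) (hn : 2 <= n) :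
  cat_isomorphic (TwoAssVbar n) (EnrGrp n).
Proof.
exists (TwoAssVbar_to_EnrGrp n), (EnrGrp_to_TwoAssVbar n).
by split; [apply: TwoAssVbar_to_EnrGrpK | apply: EnrGrp_to_TwoAssVbarK].
Qed.
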